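(* Let $X^{(n)}=\{X_1,\dots,X_n\}\subset\mathbb{R}^d$ and $u^{(n)}=\{u_1,\dots,u_n\}\subset\mathbb{R}^d$. Fix $i\in\{1,\dots,n\}$ and $\ell\in\{1,\dots,n\}$, let $v_{u_i}\in\arg\min_{v\in\mathcal{S}^{d-1}}\frac1n\sum_{j=1}^n\mathbf{1}(\langle v,u_j-u_i\rangle\geq0)$, and for $k\in\mathbb{N}$ let $X_k^{(n,\ell)}=\{X_1,\dots,X_{n-\ell},v_1^{(k)},\dots,v_\ell^{(k)}\}$ with $\{v_1^{(k)},\dots,v_\ell^{(k)}\}\subset kv_{u_i}+\mathbb{B}$. If $\mathrm{TD}(u_i;u^{(n)})<\ell/n$, then $$\lim_{k\to\infty}\|\hat T_{X_k^{(n,\ell)}}(u_i)\|=\infty.$$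
   Context: $\mathbb{B}=\{x:\|x\|\leq1\}$. For a set $Z^{(n)}$ of $n$ points, $\hat T_{Z^{(n)}}$ denotes any bijection $T:u^{(n)}\to Z^{(n)}$ minimizing $\frac1n\sum_{j}\|T(u_j)-u_j\|^2$. $\mathrm{TD}(u;u^{(n)})=\min_{v\in\mathcal{S}^{d-1}}\frac1n\sum_j\mathbf{1}(\langle v,u_j-u\rangle\geq0)$. *)

From HB Require Import structures.
From mathcomp Require Import all_boot all_order all_algebra all_fingroup.
From mathcomp Require Import all_classical all_reals all_analysis.
Set Implicit Arguments. Unset Strict Implicit. Unset Printing Implicit Defensive.
Import Order.TTheory GRing.Theory Num.Theory.
Local Open Scope ring_scope.
Local Open Scope classical_set_scope.

Definition edot (R : realType) (d : nat) (x y : 'rV[R]_d) : R :=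
  \sum_(m < d) x ord0 m * y ord0 m.

Definition enorm (R : realType) (d : nat) (x : 'rV[R]_d) : R :=
  Num.sqrt (edot x x).

Definition sphere (R : realType) (d : nat) : set 'rV[R]_d :=
  [set v | enorm v = 1].
Arguments sphere : clear implicits.

Definition ball1 (R : realType) (d : nat) : set 'rV[R]_d :=
  [set x | enorm x <= 1].
Arguments ball1 : clear implicits.

Definition depth_dir (R : realType) (d n : nat) (u : 'I_n -> 'rV[R]_d)
  (z : 'rV[R]_d) (v : 'rV[R]_d) : R :=
  (n%:R)^-1 * (#|[set j : 'I_n | 0 <= edot v (u j - z)]|)%:R.

(* Tukey depth TD(z; u^(n)) = min over v in S^{d-1}; stated as the infimum
   (the set of values is finite, so the inf is attained when d >= 1). *)
Definition TD (R : realType) (d n : nat) (z : 'rV[R]_d) (u : 'I_n -> 'rV[R]_d) : R :=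
  inf [set depth_dir u z v | v in sphere R d].

Definition tcost (R : realType) (d n : nat) (u Z : 'I_n -> 'rV[R]_d)
  (s : 'S_n) : R :=
  (n%:R)^-1 * \sum_(j < n) enorm (Z (s j) - u j) ^+ 2.

(* s is an optimal bijection u^(n) -> Z^(n), i.e. defines \hat T_Z *)
Definition optimal_map (R : realType) (d n : nat) (u Z : 'I_n -> 'rV[R]_d)
  (s : 'S_n) : Prop :=
  forall t : 'S_n, tcost u Z s <= tcost u Z t.

(* X_k^(n,l) = {X_1, ..., X_{n-l}, v_1^(k), ..., v_l^(k)} as an indexed family *)
Definition contaminated (R : realType) (d n l : nat) (X : 'I_n -> 'rV[R]_d)
  (w : 'I_l -> 'rV[R]_d) : 'I_n -> 'rV[R]_d :=
  fun j => match (j - (n - l) < l)%N =P true with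
           | ReflectT h => if (j < n - l)%N then X j else w (Ordinal h)
           | ReflectF _ => X j
           end.

From HB Require Import structures.
From mathcomp Require Import all_boot all_order all_algebra all_fingroup.
From mathcomp Require Import all_classical all_reals all_analysis.
From mathcomp Require Import ring lra zify.
Set Implicit Arguments. Unset Strict Implicit. Unset Printing Implicit Defensive.
Import Order.TTheory GRing.Theory Num.Theory.
Local Open Scope ring_scope.
Local Open Scope classical_set_scope.

(* Optimality of [T_k] against exchanging the targets of two points makes it
   monotone: <T(u_j) - T(u_i), u_j - u_i> >= 0.  If [T_k(u_i)] were one of the
   clean points X, then for k large every u_j sent into the cluster k v + B
   would satisfy <v, u_j - u_i> >= 0; these are l distinct points, so the
   depth of u_i in the minimizing direction v would be at least l/n > TD(u_i).
   Hence [T_k(u_i)] eventually lies in k v + B, whose norm is at least k - 1. *)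

Section Euclidean.
Context {R : realType} {d : nat}.
Implicit Types x y z : 'rV[R]_d.

Lemma edotC x y : edot x y = edot y x.
Proof. by apply: eq_bigr => m _; rewrite mulrC. Qed.

Lemma edotDl x y z : edot (x + y) z = edot x z + edot y z.
Proof. by rewrite /edot -big_split; apply: eq_bigr => m _; rewrite mxE mulrDl. Qed.

Lemma edotZl (a : R) x z : edot (a *: x) z = a * edot x z.
Proof. by rewrite /edot mulr_sumr; apply: eq_bigr => m _; rewrite mxE mulrA. Qed.

Lemma edotNl x z : edot (- x) z = - edot x z.
Proof. by rewrite -scaleN1r edotZl mulN1r. Qed.

Lemma edotBl x y z : edot (x - y) z = edot x z - edot y z.
Proof. by rewrite edotDl edotNl. Qed.

Lemma edotBr x y z : edot z (x - y) = edot z x - edot z y.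
Proof. by rewrite !(edotC z) edotBl. Qed.

Lemma edotZr (a : R) x z : edot z (a *: x) = a * edot z x.
Proof. by rewrite !(edotC z) edotZl. Qed.

Lemma edotxx_ge0 x : 0 <= edot x x.
Proof. by apply: sumr_ge0 => m _; rewrite -expr2 sqr_ge0. Qed.

Lemma enorm_ge0 x : 0 <= enorm x.
Proof. exact: sqrtr_ge0. Qed.

Lemma enorm_sqr x : enorm x ^+ 2 = edot x x.
Proof. by rewrite /enorm sqr_sqrtr // edotxx_ge0. Qed.

Lemma edot_sqr_le x y : edot x y ^+ 2 <= edot x x * edot y y.
Proof.
have quad s t : 0 <= s ^+ 2 * edot x x - 2 * s * t * edot x y + t ^+ 2 * edot y y.
  have := edotxx_ge0 (s *: x - t *: y).
  by rewrite !(edotBl, edotBr, edotZl, edotZr) (edotC y x); lra.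
(* [quad a (c + 1)] forces [a = 0] when [b = 0]; [quad b a] is [b (c b - a^2) >= 0]. *)
have := quad (edot y y) (edot x y); have := quad (edot x y) (edot x x + 1).
have := edotxx_ge0 x; have := edotxx_ge0 y.
set a := edot x y; set b := edot y y; set c := edot x x => b_ge0 c_ge0 quad_ac quad_ba.
have [b0|b_neq0] := eqVneq b 0.
  by move: quad_ac; rewrite b0 !mulr0; have := mulr_ge0 c_ge0 (sqr_ge0 a); nra.
have : 0 < b by rewrite lt_def b_neq0.
nra.
Qed.

Lemma normr_edot_le x y : `|edot x y| <= enorm x * enorm y.
Proof.
rewrite -ler_sqr ?nnegrE ?normr_ge0 ?mulr_ge0 ?enorm_ge0 //.
by rewrite real_normK ?num_real // exprMn !enorm_sqr edot_sqr_le.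
Qed.

Lemma enorm_ray_ge (v w : 'rV[R]_d) (k : R) :
  enorm v = 1 -> enorm (w - k *: v) <= 1 -> k - 1 <= enorm w.
Proof.
move=> v_unit near_kv.
have vv : edot v v = 1 by rewrite -enorm_sqr v_unit expr1n.
have wv : edot w v = edot (w - k *: v) v + k by rewrite edotBl edotZl vv; ring.
have := ler_normlW (normr_edot_le w v).
have := lerNnormlW (normr_edot_le (w - k *: v) v).
rewrite v_unit !mulr1; lra.
Qed.

Lemma far_point_edot_bound (v w x a : 'rV[R]_d) (k M : R) :
  enorm (w - k *: v) <= 1 -> enorm x <= M -> 0 <= edot (w - x) a ->
  k * - edot v a <= enorm a * (1 + M).
Proof.
move=> near_kv x_le wxa.
have : edot (w - x) a = edot (w - k *: v) a + k * edot v a - edot x a.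
  by rewrite !edotBl edotZl; ring.
have := ler_normlW (normr_edot_le (w - k *: v) a).
have := lerNnormlW (normr_edot_le x a).
have := ler_wpM2r (enorm_ge0 a) near_kv; have := ler_wpM2r (enorm_ge0 a) x_le.
lra.
Qed.

End Euclidean.

Lemma bigD2 {V : nmodType} {I : finType} (F : I -> V) {i j : I} : i != j ->
  \sum_k F k = F i + F j + \sum_(k | (k != i) && (k != j)) F k.
Proof.
move=> ij; rewrite (bigD1 i) //= (bigD1 j) /=; last by rewrite eq_sym.
by rewrite addrA; congr (_ + _); apply: eq_bigl => k; rewrite andbC.
Qed.

Lemma optimal_map_monotone (R : realType) (d n : nat) (u Z : 'I_n -> 'rV[R]_d)
    (s : 'S_n) (i j : 'I_n) :
  optimal_map u Z s -> i != j -> 0 <= edot (Z (s j) - Z (s i)) (u j - u i).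
Proof.
move=> s_opt ij; have := s_opt (tperm i j * s)%g.
have n_gt0 : (0 < n)%N by case: n i {u Z s s_opt j ij} => [[]|].
rewrite /tcost ler_pM2l ?invr_gt0 ?ltr0n // !(bigD2 _ ij) /= !permM tpermL tpermR.
rewrite [X in _ <= _ + X](eq_bigr (fun k => enorm (Z (s k) - u k) ^+ 2)); last first.
  by move=> k /andP[ki kj]; rewrite permM tpermD // eq_sym.
rewrite !enorm_sqr !(edotBl, edotBr) !(edotC (u _)) (edotC (Z (s i))) (edotC (u i)).
lra.
Qed.

Lemma TD_minimizer (R : realType) (d n : nat) (u : 'I_n -> 'rV[R]_d) (z v : 'rV[R]_d) :
  v \in sphere R d ->
  (forall w, w \in sphere R d -> depth_dir u z v <= depth_dir u z w) ->
  TD z u = depth_dir u z v.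
Proof.
move=> /set_mem v_sphere v_min.
have v_lb : lbound [set depth_dir u z w | w in sphere R d] (depth_dir u z v).
  by move=> _ [w /mem_set w_sphere <-]; exact: v_min.
apply/le_anti/andP; split; last by apply: lb_le_inf => //; exists (depth_dir u z v), v.
by apply: ge_inf; [exists (depth_dir u z v) | exists v].
Qed.

Lemma depth_dir_ge_inj (R : realType) (d n l : nat) (u : 'I_n -> 'rV[R]_d)
    (z v : 'rV[R]_d) (f : 'I_l -> 'I_n) :
  injective f -> (forall m, 0 <= edot v (u (f m) - z)) ->
  l%:R / n%:R <= depth_dir u z v.
Proof.
move=> f_inj f_ge0; rewrite /depth_dir mulrC ler_wpM2l ?invr_ge0 ?ler0n // ler_nat.
have <- : #|f @: [set: 'I_l]%SET| = l by rewrite card_imset // cardsT card_ord.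
by apply/subset_leq_card/fintype.subsetP => _ /imsetP[m _ ->]; exact/mem_set/f_ge0.
Qed.

Lemma scaled_sign_threshold (R : realType) (I : finType) (c b : I -> R) :
  exists B : R, forall (k : R) j, B < k -> k * - c j <= b j -> 0 <= c j.
Proof.
exists (\sum_j `|b j| / `|c j|) => k j B_lt_k kc_le; rewrite leNgt; apply/negP => c_lt0.
have : `|b j| / `|c j| <= \sum_j `|b j| / `|c j|.
  by rewrite (bigD1 j) //= lerDl sumr_ge0 // => *; rewrite divr_ge0.
have : k <= `|b j| / `|c j|.
  rewrite ler_pdivlMr ?normr_gt0 ?ltr0_neq0 //.
  by rewrite ltr0_norm //; apply: le_trans kc_le (ler_norm _).
lra.
Qed.

Section Contaminated.
Variables (R : realType) (d n l : nat) (X : 'I_n -> 'rV[R]_d) (w : 'I_l -> 'rV[R]_d).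

Lemma contaminated_lo (j : 'I_n) : (j < n - l)%N -> contaminated X w j = X j.
Proof. by rewrite /contaminated => j_lo; case: eqP => // j_lt; rewrite j_lo. Qed.

Lemma contaminated_hi (j : 'I_n) :
  (l <= n)%N -> (n - l <= j)%N -> exists m, contaminated X w j = w m.
Proof.
move=> l_le_n j_hi; rewrite /contaminated; case: eqP => [j_lt | []].
  by rewrite ltnNge j_hi; eexists.
by have := ltn_ord j; lia.
Qed.

End Contaminated.

Section OptimalContaminated.
Variables (R : realType) (d n l : nat) (X u : 'I_n -> 'rV[R]_d) (i : 'I_n).
Variables (v : 'rV[R]_d) (M k : R) (w : 'I_l -> 'rV[R]_d) (s : 'S_n).
Hypotheses (l_le_n : (l <= n)%N) (X_le : forall m, enorm (X m) <= M).
Hypothesis w_near : forall m, enorm (w m - k *: v) <= 1.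
Hypothesis s_opt : optimal_map u (contaminated X w) s.
Hypothesis i_clean : (s i < n - l)%N.

Lemma optimal_contaminated_bound (j : 'I_n) : (n - l <= s j)%N ->
  k * - edot v (u j - u i) <= enorm (u j - u i) * (1 + M).
Proof.
move=> j_hi; have ij : i != j by apply: contraTneq j_hi => <-; rewrite -ltnNge.
have := optimal_map_monotone s_opt ij.
have [m ->] := contaminated_hi X w l_le_n j_hi; rewrite contaminated_lo //.
exact: far_point_edot_bound.
Qed.

Lemma optimal_contaminated_depth_ge :
  (forall j, k * - edot v (u j - u i) <= enorm (u j - u i) * (1 + M) ->
             0 <= edot v (u j - u i)) ->
  l%:R / n%:R <= depth_dir u (u i) v.
Proof.
move=> sign_ge0.
have hi_lt (m : 'I_l) : (n - l + m < n)%N by have := ltn_ord m; lia.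
pose f m := (s^-1)%g (Ordinal (hi_lt m)).
have sf m : s (f m) = Ordinal (hi_lt m) by rewrite permKV.
apply: (depth_dir_ge_inj (f := f)).
  by move=> m m' /(congr1 (val \o s)); rewrite /= !sf /= => /addnI /val_inj.
by move=> m; apply/sign_ge0/optimal_contaminated_bound; rewrite sf leq_addr.
Qed.

End OptimalContaminated.

Theorem mainTheorem9 (R : realType) (d n : nat)
  (X u : 'I_n -> 'rV[R]_d) (i : 'I_n) (l : nat)
  (hl1 : (1 <= l)%N) (hln : (l <= n)%N)
  (vui : 'rV[R]_d)
  (hvui_unit : vui \in sphere R d)
  (hvui_min : forall w, w \in sphere R d -> depth_dir u (u i) vui <= depth_dir u (u i) w)
  (vk : nat -> 'I_l -> 'rV[R]_d)
  (hvk : forall (k : nat) (m : 'I_l), (vk k m - k%:R *: vui) \in ball1 R d)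
  (T : nat -> 'S_n)
  (hT : forall k : nat, optimal_map u (contaminated X (vk k)) (T k))
  (hTD : TD (u i) u < l%:R / n%:R) :
  (fun k : nat => enorm (contaminated X (vk k) (T k i))) @ \oo --> +oo.
Proof.
have vui_unit : enorm vui = 1 := set_mem hvui_unit.
have vk_near k m : enorm (vk k m - k%:R *: vui) <= 1 := set_mem (hvk k m).
have depth_lt : depth_dir u (u i) vui < l%:R / n%:R.
  by rewrite -(TD_minimizer hvui_unit hvui_min).
pose M := \sum_m enorm (X m).
have X_le m : enorm (X m) <= M.
  by rewrite /M (bigD1 m) //= lerDl sumr_ge0 // => *; exact: enorm_ge0.
have [B B_sign] := scaled_sign_threshold (fun j => edot vui (u j - u i))
  (fun j => enorm (u j - u i) * (1 + M)).
have i_contaminated k : B < k%:R -> (n - l <= T k i)%N.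
  move=> B_lt_k; rewrite leqNgt; apply/negP => i_clean.
  have := optimal_contaminated_depth_ge hln X_le (vk_near k) (hT k) i_clean
    (B_sign _ ^~ B_lt_k).
  by rewrite leNgt depth_lt.
apply/cvgryPge => A; near=> k.
have B_lt_k : B < k%:R by near: k; exact: nbhs_infty_gtr.
have [m ->] := contaminated_hi X (vk k) hln (i_contaminated k B_lt_k).
apply: le_trans (enorm_ray_ge vui_unit (vk_near k m)).
by rewrite lerBrDr; near: k; exact: nbhs_infty_ger.
Unshelve. all: end_near.
Qed.
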